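(* Let $X$ be a random variable taking values in a metric space $(\mathcal{X}, d)$ and $Y \in [0,1]$ a target outcome. Let $L > 0$, $\alpha \ge 0$, and let $\mathcal{F}^{\text{Lip}(L,d)}$ be the set of functions $f : \mathcal{X} \to [0,1]$ satisfying $|f(x) - f(x')| \le L\, d(x, x')$ for all $x, x' \in \mathcal{X}$. Let $\{S_k\}_{k \in K}$, $K \subseteq \mathbb{N}$, be a partition of $\mathcal{X}$ in which each $S_k$ has diameter at most $4\alpha / L$ with respect to $d$ (and $\mathbb{P}(X \in S_k) > 0$). Then $\{S_k\}_{k \in K}$ is an $\alpha$-multicalibrated partition with respect to $\mathcal{F}^{\text{Lip}(L,d)}$ and $Y$.
   Context: A set $S \subseteq \mathcal{X}$ is $\alpha$-indistinguishable with respect to a function class $\mathcal{F}$ and $Y$ if $|\mathrm{Cov}(f(X), Y \mid X \in S)| \le \alpha$ for all $f \in \mathcal{F}$. Sets $\{S_k\}$ form an $\alpha$-multicalibrated partition with respect to $\mathcal{F}$ and $Y$ if they partition $\mathcal{X}$ and each $S_k$ is $\alpha$-indistinguishable with respect to $\mathcal{F}$ and $Y$. *)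

From HB Require Import structures.
From mathcomp Require Import all_boot all_order all_algebra.
From mathcomp Require Import all_classical all_reals all_analysis.
Set Implicit Arguments. Unset Strict Implicit. Unset Printing Implicit Defensive.
Import Order.TTheory GRing.Theory Num.Theory.
Local Open Scope classical_set_scope.
Local Open Scope ring_scope.

Definition is_metric (R : realType) (Xs : Type) (d : Xs -> Xs -> R) : Prop :=
  (forall x y, 0 <= d x y) /\ (forall x y, d x y = 0 <-> x = y) /\
  (forall x y, d x y = d y x) /\ (forall x y z, d x z <= d x y + d y z).

Definition d_open (R : realType) (Xs : Type) (d : Xs -> Xs -> R) (U : set Xs) : Prop :=
  forall x, U x -> exists2 r : R, 0 < r & forall y, d x y < r -> U y.

Definition borel_rv (dT : measure_display) (T : measurableType dT) (R : realType)
  (Xs : Type) (d : Xs -> Xs -> R) (X : T -> Xs) : Prop :=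
  forall A : set Xs, <<s d_open d >> A -> measurable (X @^-1` A).

Definition condE (dT : measure_display) (T : measurableType dT) (R : realType)
  (P : probability T R) (A : set T) (Z : T -> R) : R :=
  fine (\int[P]_(w in A) (Z w)%:E) / fine (P A).

Definition condCov (dT : measure_display) (T : measurableType dT) (R : realType)
  (Xs : Type) (P : probability T R) (X : T -> Xs) (Y : T -> R)
  (f : Xs -> R) (S : set Xs) : R :=
  let A := X @^-1` S in
  condE P A (fun w => f (X w) * Y w) - condE P A (fun w => f (X w)) * condE P A Y.

Definition indistinguishable (dT : measure_display) (T : measurableType dT)
  (R : realType) (Xs : Type) (P : probability T R) (X : T -> Xs) (Y : T -> R)
  (F : set (Xs -> R)) (alpha : R) (S : set Xs) : Prop :=
  forall f, F f -> `|condCov P X Y f S| <= alpha.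

Definition is_partition (Xs : Type) (K : set nat) (S : nat -> set Xs) : Prop :=
  (forall k k', K k -> K k' -> k <> k' -> S k `&` S k' = set0) /\
  (forall x, exists2 k, K k & S k x).

Definition multicalibrated_partition (dT : measure_display) (T : measurableType dT)
  (R : realType) (Xs : Type) (P : probability T R) (X : T -> Xs) (Y : T -> R)
  (F : set (Xs -> R)) (alpha : R) (K : set nat) (S : nat -> set Xs) : Prop :=
  is_partition K S /\ forall k, K k -> indistinguishable P X Y F alpha (S k).

Definition Lip_class (R : realType) (Xs : Type) (L : R) (d : Xs -> Xs -> R)
  : set (Xs -> R) :=
  [set f | (forall x, 0 <= f x <= 1) /\ (forall x x', `|f x - f x'| <= L * d x x')].

(* On a cell S of diameter at most 4 alpha / L, an L-Lipschitz f oscillates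
   by at most 4 alpha, so f(X) stays within r = 2 alpha of a constant c on the
   event A = [X \in S].  Then Cov(f(X), Y | A) = E[(f(X) - c) (Y - m) | A]
   with m = E[Y | A], and the pointwise bound |Y - m| <= Y (1 - m) + (1 - Y) m
   for Y, m in [0, 1] gives |Cov| <= r * 2 m (1 - m) <= r / 2 = alpha. *)

From HB Require Import structures.
From mathcomp Require Import all_boot all_order all_algebra.
From mathcomp Require Import all_classical all_reals all_analysis.
From mathcomp Require Import ring lra measurable_realfun.
Set Implicit Arguments.
Unset Strict Implicit.
Unset Printing Implicit Defensive.
Import Order.TTheory GRing.Theory Num.Theory.
Local Open Scope classical_set_scope.
Local Open Scope ring_scope.

Section bounded_measurable.
Context d (T : measurableType d) (R : realType).
Implicit Types f g : T -> R.

Definition bounded_measurable f :=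
  measurable_fun setT f /\ exists M : R, forall x, `|f x| <= M.

Lemma bounded_measurable_cst (k : R) : bounded_measurable (fun=> k).
Proof. by split; [exact: measurable_cst | exists `|k|]. Qed.

Lemma bounded_measurableD f g : bounded_measurable f -> bounded_measurable g ->
  bounded_measurable (fun x => f x + g x).
Proof.
move=> [mf [M fM]] [mg [N gN]]; split; first exact: measurable_funD.
by exists (M + N) => x; apply: le_trans (ler_normD _ _) (lerD (fM x) (gN x)).
Qed.

Lemma bounded_measurableB f g : bounded_measurable f -> bounded_measurable g ->
  bounded_measurable (fun x => f x - g x).
Proof.
move=> [mf [M fM]] [mg [N gN]]; split; first exact: measurable_funB.
by exists (M + N) => x; apply: le_trans (ler_normB _ _) (lerD (fM x) (gN x)).
Qed.

Lemma bounded_measurableM f g : bounded_measurable f -> bounded_measurable g ->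
  bounded_measurable (fun x => f x * g x).
Proof.
move=> [mf [M fM]] [mg [N gN]]; split; first exact: measurable_funM.
by exists (M * N) => x; rewrite normrM ler_pM.
Qed.

Lemma bounded_measurable_norm f : bounded_measurable f ->
  bounded_measurable (fun x => `|f x|).
Proof.
move=> [mf [M fM]]; split; first exact: measurableT_comp.
by exists M => x; rewrite normr_id.
Qed.

Lemma bounded_measurable01 f : measurable_fun setT f ->
  (forall x, 0 <= f x <= 1) -> bounded_measurable f.
Proof.
move=> mf f01; split => //.
by exists 1 => x; have := f01 x; rewrite ler_norml; lra.
Qed.

Lemma bounded_measurable_integrable (mu : {finite_measure set T -> \bar R})
    (A : set T) f :
  measurable A -> bounded_measurable f -> mu.-integrable A (EFin \o f).
Proof.
move=> mA [mf [M fM]].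
apply: le_integrable (finite_measure_integrable_cst mu M mA) => //.
- exact/measurable_EFinP/(measurable_funS _ _ mf).
- by move=> x _; rewrite /= lee_fin (le_trans (fM x)) ?ler_norm.
Qed.

End bounded_measurable.

#[local] Hint Resolve bounded_measurable_cst bounded_measurableD
  bounded_measurableB bounded_measurableM bounded_measurable_norm : core.

Section conditional_expectation.
Context d (T : measurableType d) (R : realType) (P : probability T R).
Variable A : set T.
Hypotheses (mA : measurable A) (PA_gt0 : 0 < fine (P A)).
Implicit Types f g U V : T -> R.

Local Notation E := (condE P A).

Lemma condE_Rintegral f : E f = Rintegral P A f / fine (P A).
Proof. by []. Qed.

Lemma eq_condE f g : {in A, f =1 g} -> E f = E g.
Proof. by move=> fg; rewrite !condE_Rintegral (eq_Rintegral _ fg). Qed.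

Lemma condE_cst k : E (fun=> k) = k.
Proof. by rewrite condE_Rintegral Rintegral_cst // mulfK // gt_eqF. Qed.

Lemma condED f g : bounded_measurable f -> bounded_measurable g ->
  E (fun w => f w + g w) = E f + E g.
Proof.
move=> bf bg; rewrite !condE_Rintegral -mulrDl RintegralD //;
  exact: bounded_measurable_integrable.
Qed.

Lemma condEB f g : bounded_measurable f -> bounded_measurable g ->
  E (fun w => f w - g w) = E f - E g.
Proof.
move=> bf bg; rewrite !condE_Rintegral -mulrBl RintegralB //;
  exact: bounded_measurable_integrable.
Qed.

Lemma condEZl k f : bounded_measurable f -> E (fun w => k * f w) = k * E f.
Proof.
move=> bf; rewrite !condE_Rintegral RintegralZl ?mulrA //.
exact: bounded_measurable_integrable.
Qed.

Lemma le_condE f g : bounded_measurable f -> bounded_measurable g ->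
  (forall w, A w -> f w <= g w) -> E f <= E g.
Proof.
move=> bf bg fg; rewrite !condE_Rintegral ler_pM2r ?invr_gt0 //.
by apply: le_Rintegral => //; exact: bounded_measurable_integrable.
Qed.

Lemma le_normr_condE f : bounded_measurable f -> `|E f| <= E (fun w => `|f w|).
Proof.
move=> bf; rewrite !condE_Rintegral normrM [`|_^-1|]gtr0_norm ?invr_gt0 //.
rewrite ler_pM2r ?invr_gt0 //.
by apply: le_normr_Rintegral => //; exact: bounded_measurable_integrable.
Qed.

Lemma condE_abs_dev_le V : measurable_fun setT V -> (forall w, 0 <= V w <= 1) ->
  E (fun w => `|V w - E V|) <= 2^-1.
Proof.
move=> mV V01; have bV := bounded_measurable01 mV V01.
(* [mu] is kept abstract: the copies of [E V] created by rewriting carry other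
   instance paths, so a [set mu := E V] would not fold them. *)
have [mu muE] : exists mu, E V = mu by exists (E V).
have mu01 : 0 <= mu <= 1.
  rewrite -muE -[0](condE_cst 0) -[1](condE_cst 1).
  by apply/andP; split; apply: le_condE => // w _; have /andP[] := V01 w.
have dev_le w : `|V w - mu| <= (1 - 2 * mu) * V w + mu.
  by have := V01 w; rewrite ler_norml; nra.
rewrite muE; apply: le_trans (le_condE _ _ (fun w _ => dev_le w)) _; auto.
rewrite condED ?condEZl ?condE_cst ?muE; auto.
by have := sqr_ge0 (mu - 2^-1); nra.
Qed.

Lemma condE_cov_le U V c r : bounded_measurable U ->
  measurable_fun setT V -> (forall w, 0 <= V w <= 1) -> 0 <= r ->
  (forall w, A w -> `|U w - c| <= r) ->
  `|E (fun w => U w * V w) - E U * E V| <= r / 2.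
Proof.
move=> bU mV V01 r0 Uc; have bV := bounded_measurable01 mV V01.
have [mu muE] : exists mu, E V = mu by exists (E V).
have -> : E (fun w => U w * V w) - E U * E V =
          E (fun w => (U w - c) * (V w - mu)).
  rewrite [RHS](@eq_condE _
    (fun w => (U w * V w - mu * U w) - (c * V w - c * mu))); last first.
    by move=> w _; ring.
  by rewrite !condEB ?condEZl ?condE_cst ?muE; auto; ring.
have bW : bounded_measurable (fun w => (U w - c) * (V w - mu)) by auto.
have dev_le w : A w -> `|(U w - c) * (V w - mu)| <= r * `|V w - mu|.
  by move=> Aw; rewrite normrM ler_wpM2r ?Uc.
apply: le_trans (le_normr_condE bW) _.
apply: le_trans (le_condE _ _ dev_le) _; [by auto | by auto |].
rewrite condEZl -muE; last by auto.
exact (ler_wpM2l r0 (condE_abs_dev_le mV V01)).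
Qed.

End conditional_expectation.

Lemma bounded_oscillation_center (Xs : Type) (R : realType) (S : set Xs)
    (f : Xs -> R) (r : R) :
  S !=set0 -> (forall x y, S x -> S y -> f x - f y <= 2 * r) ->
  exists c, forall x, S x -> `|f x - c| <= r.
Proof.
move=> [x0 Sx0] osc; set F := f @` S.
have supF : has_sup F.
  split; first by exists (f x0), x0.
  by exists (f x0 + 2 * r) => _ [x Sx <-]; have := osc x x0 Sx Sx0; lra.
exists (sup F - r) => x Sx.
have le_sup : f x <= sup F by apply: sup_upper_bound => //; exists x.
have sup_le : sup F <= f x + 2 * r.
  apply: ge_sup; first by exists (f x), x.
  by move=> _ [y Sy <-]; have := osc y x Sy Sx; lra.
by rewrite ler_norml; apply/andP; split; lra.
Qed.

Lemma lipschitz_d_open_preimage (Xs : Type) (R : realType) (d : Xs -> Xs -> R)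
    (f : Xs -> R) (L : R) :
  0 < L -> (forall x x', `|f x - f x'| <= L * d x x') ->
  forall a b, d_open d (f @^-1` `]a, b[).
Proof.
move=> L0 fL a b x /=; rewrite in_itv /= => /andP[ax xb].
exists (Order.min (f x - a) (b - f x) / L).
  by apply: divr_gt0 => //; rewrite lt_min; apply/andP; split; lra.
move=> y; rewrite ltr_pdivlMr // lt_min => /andP[h1 h2].
have := fL x y; rewrite ler_norml => /andP[h3 h4].
by rewrite in_itv /=; apply/andP; split; lra.
Qed.

Lemma borel_rv_measurable_comp (dT : measure_display) (T : measurableType dT)
    (R : realType) (Xs : Type) (d : Xs -> Xs -> R) (X : T -> Xs) (f : Xs -> R) :
  borel_rv d X -> (forall a b, d_open d (f @^-1` `]a, b[)) ->
  measurable_fun setT (f \o X).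
Proof.
move=> mX fopen; apply: (measurability _ (RGenOpens.measurableE R)).
move=> _ [_ [a [b ->]] <-]; rewrite setTI comp_preimage.
by apply: mX; apply: sub_sigma_algebra; exact: fopen.
Qed.

Theorem corollary5 (dT : measure_display) (T : measurableType dT) (R : realType)
  (P : probability T R) (Xs : Type) (d : Xs -> Xs -> R)
  (X : T -> Xs) (Y : T -> R) (L alpha : R) (K : set nat) (S : nat -> set Xs) :
  is_metric d ->
  borel_rv d X ->
  measurable_fun setT Y ->
  (forall w, 0 <= Y w <= 1) ->
  0 < L -> 0 <= alpha ->
  is_partition K S ->
  (forall k, K k -> forall x y, S k x -> S k y -> d x y <= 4 * alpha / L) ->
  (forall k, K k -> measurable (X @^-1` S k)) ->
  (forall k, K k -> (0 < P (X @^-1` S k))%E) ->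
  multicalibrated_partition P X Y (Lip_class L d) alpha K S.
Proof.
move=> _ mX mY Y01 L0 alpha0 partS diamS mS PS.
split => // k Kk f [f01 fL].
have PSk : 0 < fine (P (X @^-1` S k)).
  rewrite fine_gt0 // PS //=.
  by rewrite (le_lt_trans (probability_le1 P (mS k Kk))) ?ltry.
have [w Sw] : X @^-1` S k !=set0.
  apply/set0P; apply: contraTneq (PS k Kk) => ->.
  by rewrite measure0 ltxx.
have osc x y : S k x -> S k y -> f x - f y <= 2 * (2 * alpha).
  move=> Sx Sy; have := diamS k Kk x y Sx Sy.
  rewrite ler_pdivlMr // mulrC => dxy.
  by have := fL x y; rewrite ler_norml => /andP[_]; lra.
have [c fc] := bounded_oscillation_center (ex_intro _ (X w) Sw) osc.
have bfX : bounded_measurable (f \o X).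
  apply: bounded_measurable01 => [|w'/=]; last exact: f01.
  exact/borel_rv_measurable_comp/lipschitz_d_open_preimage/fL.
have := condE_cov_le (mS k Kk) PSk bfX mY Y01 (mulr_ge0 (ler0n _ 2) alpha0)
  (fun w' Sw' => fc _ Sw').
by rewrite [2 * alpha]mulrC mulfK ?pnatr_eq0.
Qed.
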